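(* Let $R$ be a localizable partially ordered commutative ring. Then the extended Gelfand transformation $\widehat{\cdot}\colon R\to\mathscr{C}_\approx(\mathcal{D}_{\mathrm{loc}}(R))$ is a positive ring morphism.
   Context: Rings are commutative with unit; ring morphisms are unital. A partially ordered commutative ring is a commutative ring $R$ with partial order $\le$, $r\le s\Rightarrow r+t\le s+t$, positive cone $R^+$ closed under multiplication and containing all squares. $\mathbb{N}_0=\{0,1,2,\dots\}$. $\mathrm{Loc}(R)$ is the set of $s\in1+R^+$ such that $rs\in R^+$ implies $r\in R^+$ for all $r\in R$; $R$ is localizable if every $r$ satisfies $-s\le r\le s$ for some $s\in\mathrm{Loc}(R)$. A ring morphism is positive if it maps positive elements to positive elements. Admissible domains on a space $Y$: a set $\mathcal{D}$ of open subsets with $Y\in\mathcal{D}$, closed under pairwise intersections. $\mathscr{C}_\approx(\mathcal{D})$: functions in $\bigcup_{A\in\mathcal{D}}\mathscr{C}(A)$ with pointwise operations on $\operatorname{dom}f\cap\operatorname{dom}g$, modulo $f\approx g$ iff $f|_A=g|_A$ for some $A\in\mathcal{D}$, $A\subseteq\operatorname{dom}f\cap\operatorname{dom}g$; ordered by $[f]\le[g]$ iff $f|_A\le g|_A$ for some such $A$. $R_{\mathrm{loc}}$: fractions $r/s$ ($r\in R$, $s\in\mathrm{Loc}(R)$), $r/s=r'/s'$ iff $rs'=r's$, usual operations, $p/q\le r/s$ iff $ps\le rq$. $R^{\mathrm{bd}}_{\mathrm{loc}}=\{a:\exists n\in\mathbb{N}_0,\ -n\le a\le n\}$. $\mathcal{K}(R)$: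 ring morphisms $\varphi\colon R^{\mathrm{bd}}_{\mathrm{loc}}\to\mathbb{R}$ with $\varphi(a)\ge0$ for $a\ge0$, weak-$*$ topology. $\mathrm{O}_{s<\infty}=\{\varphi:\varphi(1/s)>0\}$, $\mathcal{D}_{\mathrm{loc}}(R)=\{\mathrm{O}_{s<\infty}:s\in\mathrm{Loc}(R)\}$ (admissible). The extended Gelfand transformation sends $r\in R$ to the class $\widehat r$ of $r_s\colon\mathrm{O}_{s<\infty}\to\mathbb{R}$, $\varphi\mapsto\varphi(1/s)^{-1}\varphi(r/s)$, for any $s\in\mathrm{Loc}(R)$ with $r/s\in R^{\mathrm{bd}}_{\mathrm{loc}}$ (independent of $s$). *)

From HB Require Import structures.
From mathcomp Require Import all_boot all_order all_algebra.
From mathcomp Require Import reals.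
From Stdlib Require Import ClassicalEpsilon.
Set Implicit Arguments. Unset Strict Implicit. Unset Printing Implicit Defensive.
Import Order.TTheory GRing.Theory Num.Theory.
Local Open Scope ring_scope.

Section POCR.
Variables (R : comPzRingType) (le : R -> R -> Prop).

Definition pocr : Prop :=
  (forall r, le r r) /\
  (forall r s, le r s -> le s r -> r = s) /\
  (forall r s t, le r s -> le s t -> le r t) /\
  (forall r s t, le r s -> le (r + t) (s + t)) /\
  (forall r s, le 0 r -> le 0 s -> le 0 (r * s)) /\
  (forall r, le 0 (r * r)).

Definition is_loc (s : R) : Prop :=
  le 0 (s - 1) /\ (forall r, le 0 (r * s) -> le 0 r).

Definition localizable : Prop :=
  forall r, exists s, is_loc s /\ le (- s) r /\ le r s.

(* Fractions r/s are represented by pairs (r, s) with s \in Loc(R). *)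
Definition frac_eq (a b : R * R) : Prop := a.1 * b.2 = b.1 * a.2.
Definition frac_le (a b : R * R) : Prop := le (a.1 * b.2) (b.1 * a.2).
Definition frac_add (a b : R * R) : R * R := (a.1 * b.2 + b.1 * a.2, a.2 * b.2).
Definition frac_mul (a b : R * R) : R * R := (a.1 * b.1, a.2 * b.2).
Definition frac_one : R * R := (1, 1).

Definition frac_bd (a : R * R) : Prop :=
  is_loc a.2 /\
  exists n : nat, frac_le (- (n%:R), 1) a /\ frac_le a (n%:R, 1).

Variable RR : realType.

(* K(R): positive ring morphisms R^bd_loc -> RR, represented as functions on
   pairs, respecting equality of fractions, normalized to 0 on pairs that
   do not represent an element of R^bd_loc. *)
Definition is_char (phi : R * R -> RR) : Prop :=
  (forall a, ~ frac_bd a -> phi a = 0) /\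
  (forall a b, frac_bd a -> frac_bd b -> frac_eq a b -> phi a = phi b) /\
  (forall a b, frac_bd a -> frac_bd b -> phi (frac_add a b) = phi a + phi b) /\
  (forall a b, frac_bd a -> frac_bd b -> phi (frac_mul a b) = phi a * phi b) /\
  phi frac_one = 1 /\
  (forall a, frac_bd a -> frac_le (0, 1) a -> 0 <= phi a).

Definition kset := (R * R -> RR) -> Prop.

Definition near_in (phi psi : R * R -> RR) (l : seq (R * R)) (e : RR) : Prop :=
  forall a, List.In a l -> `|psi a - phi a| < e.

Definition continuous_on (A : kset) (f : (R * R -> RR) -> RR) : Prop :=
  forall phi, A phi -> forall e : RR, 0 < e ->
    exists (l : seq (R * R)) (d : RR), 0 < d /\
      forall psi, A psi -> near_in phi psi l d -> `|f psi - f phi| < e.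

Definition Oset (s : R) : kset := fun phi => is_char phi /\ 0 < phi (1, s).

Definition in_Dloc (A : kset) : Prop :=
  exists s, is_loc s /\ forall phi, A phi <-> Oset s phi.

Record dfun := DFun { ddom : kset; dval : (R * R -> RR) -> RR }.

Definition in_C (f : dfun) : Prop := in_Dloc (ddom f) /\ continuous_on (ddom f) (dval f).

Definition dadd (f g : dfun) : dfun :=
  DFun (fun phi => ddom f phi /\ ddom g phi) (fun phi => dval f phi + dval g phi).
Definition dmul (f g : dfun) : dfun :=
  DFun (fun phi => ddom f phi /\ ddom g phi) (fun phi => dval f phi * dval g phi).
Definition dunit : dfun := DFun is_char (fun _ => 1).
Definition dzero : dfun := DFun is_char (fun _ => 0).

Definition approx (f g : dfun) : Prop :=
  exists C, in_Dloc C /\ (forall phi, C phi -> ddom f phi /\ ddom g phi) /\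
    (forall phi, C phi -> dval f phi = dval g phi).

Definition dle (f g : dfun) : Prop :=
  exists C, in_Dloc C /\ (forall phi, C phi -> ddom f phi /\ ddom g phi) /\
    (forall phi, C phi -> dval f phi <= dval g phi).

Definition gelf_rep (r s : R) : dfun :=
  DFun (Oset s) (fun phi => (phi (1, s))^-1 * phi (r, s)).

(* a chosen s \in Loc(R) with r/s \in R^bd_loc (exists if R is localizable) *)
Definition gelf_s (r : R) : R := epsilon (inhabits 0) (fun s => frac_bd (r, s)).

(* extended Gelfand transformation (a representative of the class) *)
Definition gelfand (r : R) : dfun := gelf_rep r (gelf_s r).

Definition pos_rmorph_C (h : R -> dfun) : Prop :=
  (forall r, in_C (h r)) /\
  approx (h 1) dunit /\
  (forall r r', approx (h (r + r')) (dadd (h r) (h r'))) /\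
  (forall r r', approx (h (r * r')) (dmul (h r) (h r'))) /\
  (forall r, le 0 r -> dle dzero (h r)).

End POCR.

From HB Require Import structures.
From mathcomp Require Import all_boot all_order all_algebra.
From mathcomp Require Import reals.
From mathcomp Require Import ring lra.
From Stdlib Require Import ClassicalEpsilon.
Set Implicit Arguments. Unset Strict Implicit. Unset Printing Implicit Defensive.
Import Order.TTheory GRing.Theory Num.Theory.
Local Open Scope ring_scope.

(* A character phi is multiplicative, so phi(r/(su)) = phi(r/s) phi(1/u);
   hence phi(1/s)^-1 phi(r/s) does not change when s is replaced by a
   Loc-multiple su, as long as phi(1/(su)) > 0.  Finitely many r_s can
   therefore be compared on a common O_{t<oo} with t the product of their
   denominators, where the ring laws reduce to those of phi at the common
   denominator t.  Continuity of r_s is continuity of (x, y) |-> y / x at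
   (phi(1/s), phi(r/s)), and positivity comes from that of phi. *)

Lemma inv_mul_near (RR : realFieldType) (a b e : RR) : 0 < a -> 0 < e ->
  exists2 d : RR, 0 < d & forall x y, `|x - a| < d -> `|y - b| < d ->
    `|x^-1 * y - a^-1 * b| < e.
Proof.
move=> a0 e0; have ab0 : 0 < a + `|b| by apply: ltr_wpDr.
set d2 := e * a * a / (4%:R * (a + `|b|)).
have d20 : 0 < d2 by rewrite divr_gt0 ?mulr_gt0.
have d2E : d2 * (a + `|b|) = e * a * a / 4%:R by rewrite /d2; field; apply: lt0r_neq0.
exists (Num.min (a / 2%:R) d2) => [|x y]; first by rewrite lt_min d20 divr_gt0.
rewrite !lt_min => /andP[xa1 xa2] /andP[_ yb].
have xa : a / 2%:R < x.
  move: xa1; rewrite ltr_norml => /andP[+ _].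
  have : a / 2%:R = a - a / 2%:R by field.
  lra.
have x0 : 0 < x by apply: lt_trans xa; rewrite divr_gt0.
have -> : x^-1 * y - a^-1 * b = (a * (y - b) - b * (x - a)) / (a * x).
  by field; rewrite !gt_eqF.
rewrite normrM normfV (gtr0_norm (mulr_gt0 a0 x0)) ltr_pdivrMr ?mulr_gt0 //.
apply: le_lt_trans (ler_normB _ _) _; rewrite !normrM (gtr0_norm a0).
have h1 : a * `|y - b| < a * d2 by rewrite ltr_pM2l.
have h2 : `|b| * `|x - a| <= `|b| * d2 by rewrite ler_wpM2l // ltW.
have h3 : e * a * (a / 2%:R) < e * a * x by rewrite ltr_pM2l // mulr_gt0.
nra.
Qed.

Section PartiallyOrderedRing.
Variables (R : comPzRingType) (le : R -> R -> Prop).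
Hypothesis Hpo : pocr le.

Lemma le_pos_sub a b : le a b <-> le 0 (b - a).
Proof.
case: Hpo => _ [_ [_ [le_add _]]]; split=> h.
  by have := le_add _ _ (- a) h; rewrite subrr.
by have := le_add _ _ a h; rewrite add0r subrK.
Qed.

Lemma pos_add a b : le 0 a -> le 0 b -> le 0 (a + b).
Proof.
case: Hpo => _ [_ [le_trans [le_add _]]] ha hb.
by apply: le_trans hb _; have := le_add _ _ b ha; rewrite add0r.
Qed.

Lemma pos_mul a b : le 0 a -> le 0 b -> le 0 (a * b).
Proof. by case: Hpo => _ [_ [_ [_ [mul _]]]]; apply: mul. Qed.

Lemma pos1 : le 0 1.
Proof. by case: Hpo => _ [_ [_ [_ [_ sq]]]]; have := sq 1; rewrite mulr1. Qed.

Lemma pos_natr n : le 0 n%:R.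
Proof.
elim: n => [|n IH]; first by case: Hpo.
by rewrite mulrS; apply: pos_add => //; apply: pos1.
Qed.

Lemma loc_pos s : is_loc le s -> le 0 s.
Proof. by move=> [h _]; rewrite -(subrK 1 s); apply: pos_add => //; apply: pos1. Qed.

Lemma loc1 : is_loc le 1.
Proof. by split=> [|r]; [rewrite subrr; case: Hpo | rewrite mulr1]. Qed.

Lemma locM s u : is_loc le s -> is_loc le u -> is_loc le (s * u).
Proof.
move=> [hs cs] [hu cu]; split=> [|r h]; last by apply/cs/cu; rewrite -mulrA.
have -> : s * u - 1 = (s - 1) * (u - 1) + (s - 1) + (u - 1) by ring.
by do 2![apply: pos_add => //]; apply: pos_mul.
Qed.

Lemma frac_bdP r s : frac_bd le (r, s) <->
  is_loc le s /\ exists n : nat, le 0 (r + n%:R * s) /\ le 0 (n%:R * s - r).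
Proof.
have E n : r * 1 - - n%:R * s = r + n%:R * s by rewrite mulr1 mulNr opprK.
rewrite /frac_bd /frac_le /=.
split=> -[hs [n [h1 h2]]]; split => //; exists n.
  by move/le_pos_sub: h1; move/le_pos_sub: h2; rewrite E mulr1.
by split; apply/le_pos_sub; rewrite ?E ?mulr1.
Qed.

Lemma frac_bd1 u : is_loc le u -> frac_bd le (1, u).
Proof.
move=> hu; apply/frac_bdP; split => //; exists 1%N; rewrite mul1r.
by split; [apply: pos_add; [apply: pos1 | apply: loc_pos] | case: hu].
Qed.

Lemma frac_bd_diag t : is_loc le t -> frac_bd le (t, t).
Proof.
move=> ht; apply/frac_bdP; split => //; exists 1%N; rewrite mul1r subrr.
by split; [apply: pos_add; apply: loc_pos | case: Hpo].
Qed.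

(* With X = n a2 and Y = m b2, the bound 3nm comes from the identities
   a1 b1 + 3XY = (a1 + X)(b1 + Y) + X (Y - b1) + Y (X - a1) and
   3XY - a1 b1 = (X - a1)(b1 + Y) + X (Y - b1) + Y (a1 + X). *)
Lemma frac_bdM a1 a2 b1 b2 : frac_bd le (a1, a2) -> frac_bd le (b1, b2) ->
  frac_bd le (a1 * b1, a2 * b2).
Proof.
move=> /frac_bdP[la [n [ha1 ha2]]] /frac_bdP[lb [m [hb1 hb2]]].
have PX : le 0 (n%:R * a2) by apply: pos_mul; [apply: pos_natr | apply: loc_pos].
have PY : le 0 (m%:R * b2) by apply: pos_mul; [apply: pos_natr | apply: loc_pos].
apply/frac_bdP; split; first exact: locM.
exists (3 * n * m)%N; rewrite !natrM; split.
  have -> : a1 * b1 + 3%:R * n%:R * m%:R * (a2 * b2) =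
    (a1 + n%:R * a2) * (b1 + m%:R * b2) + (n%:R * a2) * (m%:R * b2 - b1)
    + (m%:R * b2) * (n%:R * a2 - a1) by ring.
  by apply: pos_add; [apply: pos_add|]; apply: pos_mul.
have -> : 3%:R * n%:R * m%:R * (a2 * b2) - a1 * b1 =
  (n%:R * a2 - a1) * (b1 + m%:R * b2) + (n%:R * a2) * (m%:R * b2 - b1)
  + (m%:R * b2) * (a1 + n%:R * a2) by ring.
by apply: pos_add; [apply: pos_add|]; apply: pos_mul.
Qed.

Lemma frac_bd_mulr r s u : frac_bd le (r, s) -> is_loc le u -> frac_bd le (r, s * u).
Proof. by move=> hb hu; have := frac_bdM hb (frac_bd1 hu); rewrite mulr1. Qed.

Variable RR : realType.
Local Notation rep r s := (dval (gelf_rep le RR r s)).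

Section Character.
Variable phi : R * R -> RR.
Hypothesis phi_char : is_char le phi.

Lemma char_ge0 r s : frac_bd le (r, s) -> le 0 r -> 0 <= phi (r, s).
Proof.
case: phi_char => _ [_ [_ [_ [_ cp]]]] hb hr; apply: cp => //.
by rewrite /frac_le /= mul0r mulr1.
Qed.

Lemma char1_ge0 s : is_loc le s -> 0 <= phi (1, s).
Proof. by move=> hs; apply: char_ge0; [apply: frac_bd1 | apply: pos1]. Qed.

Lemma charM x s y u : frac_bd le (x, s) -> frac_bd le (y, u) ->
  phi (x * y, s * u) = phi (x, s) * phi (y, u).
Proof. by case: phi_char => _ [_ [_ [cm _]]]; apply: cm. Qed.

Lemma char_mulr r s u : frac_bd le (r, s) -> is_loc le u ->
  phi (r, s * u) = phi (r, s) * phi (1, u).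
Proof. by move=> hb hu; rewrite -charM ?mulr1 //; apply: frac_bd1. Qed.

Lemma char1M_gt0 s u : is_loc le s -> is_loc le u -> 0 < phi (1, s * u) ->
  0 < phi (1, s) /\ 0 < phi (1, u).
Proof.
move=> hs hu; rewrite (char_mulr (frac_bd1 hs) hu).
have [p1 p2] := (char1_ge0 hs, char1_ge0 hu).
by move=> hp; split; rewrite lt_def ?p1 ?p2 andbT;
  apply: contraTneq hp => ->; rewrite ?mul0r ?mulr0 ltxx.
Qed.

(* r/t + r'/t = (r + r')t/t^2 as fractions, and phi(t/t) = 1. *)
Lemma charD r r' t : frac_bd le (r, t) -> frac_bd le (r', t) ->
  frac_bd le (r + r', t) -> phi (r + r', t) = phi (r, t) + phi (r', t).
Proof.
move=> h1 h2 h3; have [ht _] := h1.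
have [_ [ceq [cadd [_ [c1 _]]]]] := phi_char.
rewrite -cadd // (_ : frac_add _ _ = ((r + r') * t, t * t)); last first.
  by rewrite /frac_add /=; congr pair; ring.
rewrite charM ?(ceq (t, t) (frac_one R)) ?c1 ?mulr1 //.
- by apply: frac_bd_diag.
- by apply/frac_bd1/loc1.
- by rewrite /frac_eq /= mulr1 mul1r.
- by apply: frac_bd_diag.
Qed.

End Character.

Lemma in_Dloc_Oset t : is_loc le t -> in_Dloc le (Oset (RR:=RR) le t).
Proof. by move=> ht; exists t. Qed.

Lemma OsetMl s u (phi : R * R -> RR) : is_loc le s -> is_loc le u ->
  Oset le (s * u) phi -> Oset le s phi.
Proof. by move=> hs hu [hc hp]; split => //; case: (char1M_gt0 hc hs hu hp). Qed.

Lemma gelf_rep_mulr r s u phi : frac_bd le (r, s) -> is_loc le u ->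
  Oset le (s * u) phi -> rep r s phi = rep r (s * u) phi.
Proof.
move=> hb hu [hc hp] /=; have [hs _] := hb.
have [p1 p2] := char1M_gt0 hc hs hu hp.
rewrite (char_mulr hc hb hu) (char_mulr hc (frac_bd1 hs) hu); field.
by rewrite !gt_eqF.
Qed.

Lemma gelf_repD r r' t phi : frac_bd le (r, t) -> frac_bd le (r', t) ->
  frac_bd le (r + r', t) -> Oset le t phi ->
  rep (r + r') t phi = rep r t phi + rep r' t phi.
Proof. by move=> h1 h2 h3 [hc _] /=; rewrite -mulrDr charD. Qed.

(* phi(rr'/t) phi(1/t) = phi(rr'/t^2) = phi(r/t) phi(r'/t). *)
Lemma gelf_repM r r' t phi : frac_bd le (r, t) -> frac_bd le (r', t) ->
  frac_bd le (r * r', t) -> Oset le t phi ->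
  rep (r * r') t phi = rep r t phi * rep r' t phi.
Proof.
move=> h1 h2 h3 [hc hp] /=; have [ht _] := h1.
have -> : phi (r * r', t) = phi (r, t) * phi (r', t) / phi (1, t).
  by rewrite -charM // char_mulr // mulfK // gt_eqF.
by field; rewrite gt_eqF.
Qed.

Lemma gelf_rep_ge0 r s phi : frac_bd le (r, s) -> le 0 r ->
  Oset le s phi -> 0 <= rep r s phi.
Proof.
move=> hb hr [hc hp] /=.
by apply: mulr_ge0; [rewrite invr_ge0 ltW | apply: char_ge0].
Qed.

Lemma gelf_rep_continuous r s :
  continuous_on (Oset le s) (rep r s).
Proof.
move=> phi [_ a0] e e0 /=.
have [d d0 near] := inv_mul_near (phi (r, s)) a0 e0.
exists [:: (1, s); (r, s)], d; split => // psi _ Hn.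
by apply: near; apply: Hn; rewrite /=; auto.
Qed.

Section Gelfand.
Hypothesis Hloc : localizable le.

Lemma frac_bd_gelf_s r : frac_bd le (r, gelf_s le r).
Proof.
apply: (epsilon_spec (inhabits 0) (fun s => frac_bd le (r, s))).
have [s [hs [h1 h2]]] := Hloc r; exists s; apply/frac_bdP; split => //.
exists 1%N; rewrite mul1r; split; last exact/(le_pos_sub r s).
by move/le_pos_sub: h1; rewrite opprK.
Qed.

Lemma loc_gelf_s r : is_loc le (gelf_s le r).
Proof. by case: (frac_bd_gelf_s r). Qed.

Definition gelfand_agrees (t r : R) : Prop :=
  frac_bd le (r, t) /\ forall phi, Oset le t phi ->
    ddom (gelfand le RR r) phi /\ dval (gelfand le RR r) phi = rep r t phi.

Lemma gelfand_agrees_mulr r u : is_loc le u -> gelfand_agrees (gelf_s le r * u) r.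
Proof.
move=> hu; have hb := frac_bd_gelf_s r; have [hs _] := hb.
split=> [|phi hp]; first exact: frac_bd_mulr.
by split; [apply: OsetMl hp | apply: gelf_rep_mulr].
Qed.

Lemma gelfand_common_denominator r1 r2 r3 : exists t, [/\ is_loc le t,
  gelfand_agrees t r1, gelfand_agrees t r2 & gelfand_agrees t r3].
Proof.
have ls := loc_gelf_s.
exists (gelf_s le r1 * (gelf_s le r2 * gelf_s le r3)); split.
- by apply: locM; last apply: locM.
- by apply/gelfand_agrees_mulr/locM.
- by rewrite mulrCA; apply/gelfand_agrees_mulr/locM.
- by rewrite mulrA mulrC; apply/gelfand_agrees_mulr/locM.
Qed.

Lemma approx_Oset t (f g : dfun R RR) : is_loc le t ->
  (forall phi, Oset le t phi -> [/\ ddom f phi, ddom g phi & dval f phi = dval g phi]) ->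
  approx le f g.
Proof.
move=> ht fg; exists (Oset le t); split; first exact: in_Dloc_Oset.
by split=> phi /fg[].
Qed.

Lemma gelfand_approx_op (op : R -> R -> R) (dop : RR -> RR -> RR) r r' :
  (forall t phi, frac_bd le (r, t) -> frac_bd le (r', t) -> frac_bd le (op r r', t) ->
    Oset le t phi -> rep (op r r') t phi =
      dop (rep r t phi) (rep r' t phi)) ->
  approx le (gelfand le RR (op r r'))
    (DFun (fun phi => ddom (gelfand le RR r) phi /\ ddom (gelfand le RR r') phi)
          (fun phi => dop (dval (gelfand le RR r) phi) (dval (gelfand le RR r') phi))).
Proof.
move=> opE.
have [t [ht [b1 a1] [b2 a2] [b3 a3]]] := gelfand_common_denominator r r' (op r r').
apply: (approx_Oset ht) => phi hp.
have [[d1 e1] [d2 e2]] := (a1 _ hp, a2 _ hp); have [d3 e3] := a3 _ hp.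
by split => //; rewrite e3 opE // -e1 -e2.
Qed.

End Gelfand.
End PartiallyOrderedRing.

Theorem proposition26 (R : comPzRingType) (le : R -> R -> Prop) (RR : realType) :
  pocr le -> localizable le -> @pos_rmorph_C R le RR (@gelfand R le RR).
Proof.
move=> Hpo Hloc; have hs := loc_gelf_s Hpo Hloc.
split; [|split; [|split; [|split]]].
- by move=> r; split; [apply: in_Dloc_Oset | apply: gelf_rep_continuous].
- apply: (approx_Oset (hs 1)) => phi [hc hp]; split => //=.
  by rewrite mulVf // gt_eqF.
- by move=> r r'; apply: (gelfand_approx_op Hpo) => // t phi; apply: (gelf_repD Hpo).
- by move=> r r'; apply: (gelfand_approx_op Hpo) => // t phi; apply: (gelf_repM Hpo).
- move=> r hr; exists (Oset le (gelf_s le r)); split; first exact: in_Dloc_Oset.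
  split=> phi hp; first by split => //; case: hp.
  exact: gelf_rep_ge0 (frac_bd_gelf_s Hpo Hloc r) hr hp.
Qed.
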